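(* Assume that $A_1,\dots,A_d$ are mutually independent, and that they are mutually independent conditionally on $\hat Y$, i.e. for every $y\in\mathcal Y$ and $a=(a_1,\dots,a_d)\in\mathcal A$, $p_{A\mid \hat Y}(a\mid y)=\prod_{k=1}^d p_{A_k\mid\hat Y}(a_k\mid y)$. Then $$u^*=\sup_{y\in\mathcal Y}\sum_{k=1}^d\ \sup_{(a_k,a_k')\in\mathcal A_k^2} u_k(y,a_k,a_k')\ \le\ \sum_{k=1}^d u_k^* .$$
   Context: Let $\hat Y=h(X)$ be the prediction of a fixed deterministic classifier, taking values in a finite set $\mathcal Y$, and let $A=(A_1,\dots,A_d)$ be a random vector of protected attributes, $A_k$ taking values in a finite set $\mathcal A_k$, $\mathcal A=\mathcal A_1\times\dots\times\mathcal A_d$. Write $p_V(v)=\Pr(V=v)$, $p_{V,W}(v,w)=\Pr(V=v,W=w)$ and $p_{V\mid W}(v\mid w)=\Pr(V=v\mid W=w)$. Assume $p_{A,\hat Y}(a,y)>0$ for all $(a,y)\in\mathcal A\times\mathcal Y$. For $y\in\mathcal Y$, $a,a'\in\mathcal A$, set $u(y,a,a')=\big|\log\big(p_{\hat Y\mid A}(y\mid a)/p_{\hat Y\mid A}(y\mid a')\big)\big|$ and the intersectional unfairness $u^*=\sup_{y\in\mathcal Y}\sup_{(a,a')\in\mathcal A^2}u(y,a,a')$. For each $k$ and $a_k,a_k'\in\mathcal A_k$, set $u_k(y,a_k,a_k')=\big|\log\big(p_{\hat Y\mid A_k}(y\mid a_k)/p_{\hat Y\mid A_k}(y\mid a_k')\big)\big|$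 and the marginal unfairness $u_k^*=\sup_{y\in\mathcal Y}\sup_{(a_k,a_k')\in\mathcal A_k^2}u_k(y,a_k,a_k')$. *)

From HB Require Import structures.
From mathcomp Require Import all_boot all_order all_algebra.
From mathcomp Require Import reals exp.
Set Implicit Arguments. Unset Strict Implicit. Unset Printing Implicit Defensive.
Import Order.TTheory GRing.Theory Num.Theory.
Local Open Scope ring_scope.

(* Setting: d protected attributes, A_k takes values in the finite type T k;
   the attribute vector A takes values in the product {dffun forall k, T k};
   the prediction Yhat takes values in the finite type Y.  Only the joint law of
   (A, Yhat) matters; it is given by a pmf P on A x Y. *)
Section Fair.
Variables (R : realType) (d : nat) (T : 'I_d -> finType) (Y : finType).
Definition attr := {dffun forall k : 'I_d, T k}.
Variable P : {ffun attr * Y -> R}.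

Definition is_pmf := (forall z, 0 <= P z) /\ \sum_z P z = 1.

Definition pAY (a : attr) (y : Y) : R := P (a, y).
Definition pA (a : attr) : R := \sum_(y : Y) P (a, y).
Definition pY (y : Y) : R := \sum_(a : attr) P (a, y).
Definition pAk (k : 'I_d) (ak : T k) : R := \sum_(a : attr | a k == ak) pA a.
Definition pAkY (k : 'I_d) (ak : T k) (y : Y) : R :=
  \sum_(a : attr | a k == ak) P (a, y).

Definition pY_A (y : Y) (a : attr) : R := pAY a y / pA a.
Definition pY_Ak (k : 'I_d) (y : Y) (ak : T k) : R := pAkY ak y / pAk ak.
Definition pA_Y (a : attr) (y : Y) : R := pAY a y / pY y.
Definition pAk_Y (k : 'I_d) (ak : T k) (y : Y) : R := pAkY ak y / pY y.

(* unfairness measures; suprema over finite sets of nonnegative reals are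
   written as iterated max with neutral element 0 *)
Definition u (y : Y) (a a' : attr) : R := `| ln (pY_A y a / pY_A y a') |.
Definition ustar : R :=
  \big[Num.max/0]_(y : Y) \big[Num.max/0]_(aa : attr * attr) u y aa.1 aa.2.
Definition uk (k : 'I_d) (y : Y) (ak ak' : T k) : R :=
  `| ln (pY_Ak y ak / pY_Ak y ak') |.
Definition ukstar (k : 'I_d) : R :=
  \big[Num.max/0]_(y : Y) \big[Num.max/0]_(aa : T k * T k) uk y aa.1 aa.2.

Definition mutually_independent :=
  forall a : attr, pA a = \prod_(k < d) pAk (a k).
Definition cond_mutually_independent :=
  forall (y : Y) (a : attr), pA_Y a y = \prod_(k < d) pAk_Y (a k) y.
End Fair.

From HB Require Import structures.
From mathcomp Require Import all_boot all_order all_algebra.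
From mathcomp Require Import reals exp.
From mathcomp Require Import ring.
Import Order.TTheory GRing.Theory Num.Theory.
Local Open Scope ring_scope.
Set Implicit Arguments. Unset Strict Implicit.

(* Independence and conditional independence make the likelihood p(y | a) a
   product over the attributes of p(y | a_k) / p(y), up to a factor p(y); hence
   the log-ratio u(y, a, a') is a sum over k of the marginal log-ratios.  Each
   summand is antisymmetric in (a_k, a_k'), so the pair (a, a') can be chosen
   coordinatewise to make every summand nonnegative and maximal at once: the
   maximum of the absolute value of the sum is the sum of the maxima. *)

Lemma ler_sum_term (R : numDomainType) (I : finType) (P : pred I) (F : I -> R) (j : I) :
  P j -> (forall i, P i -> 0 <= F i) -> F j <= \sum_(i | P i) F i.
Proof. by move=> Pj F0; rewrite (bigD1 j) //= lerDl sumr_ge0 // => i /andP[/F0]. Qed.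

Section AntisymmetricMaxima.
Variable R : realDomainType.

Lemma bigmax_norm_attained_antisym (I : finType) (h : I -> I -> R) (i0 : I) :
  (forall x x', h x' x = - h x x') ->
  exists p : I * I, \big[Num.max/0]_(q : I * I) `|h q.1 q.2| = h p.1 p.2.
Proof.
move=> hN.
have [p _ ->] := eq_bigmax (i0, i0) predT (fun q : I * I => `|h q.1 q.2|) isT
  (fun _ _ => normr_ge0 _).
have [h_ge0 | h_lt0] := lerP 0 (h p.1 p.2).
  by exists p; rewrite ger0_norm.
by exists (p.2, p.1); rewrite ltr0_norm // hN.
Qed.

Lemma bigmax_norm_sum_antisym (d : nat) (T : 'I_d -> finType)
    (h : forall k, T k -> T k -> R) (a0 : attr T) :
  (forall k x x', h k x' x = - h k x x') ->
  \big[Num.max/0]_(aa : attr T * attr T) `|\sum_(k < d) h k (aa.1 k) (aa.2 k)|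
  = \sum_(k < d) \big[Num.max/0]_(p : T k * T k) `|h k p.1 p.2|.
Proof.
move=> hN; apply/eqP; rewrite eq_le; apply/andP; split.
  apply: bigmax_le => [|aa _]; first by rewrite sumr_ge0 // => k _; exact: bigmax_ge_id.
  apply: le_trans (ler_norm_sum _ _ _) _; apply: ler_sum => k _.
  exact: (le_bigmax _ (fun p : T k * T k => `|h k p.1 p.2|) (aa.1 k, aa.2 k)).
have [c hc] := fin_all_exists (fun k => bigmax_norm_attained_antisym (a0 k) (hN k)).
pose a : attr T := [ffun k => (c k).1]; pose a' : attr T := [ffun k => (c k).2].
have -> : \sum_(k < d) \big[Num.max/0]_(p : T k * T k) `|h k p.1 p.2|
          = \sum_(k < d) h k (a k) (a' k).
  by apply: eq_bigr => k _; rewrite !ffunE hc.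
apply: le_trans (ler_norm _) _.
exact: (le_bigmax _ (fun aa : attr T * attr T =>
  `|\sum_(k < d) h k (aa.1 k) (aa.2 k)|) (a, a')).
Qed.

End AntisymmetricMaxima.

Lemma sum_eq1_inhabited (R : numDomainType) (I : finType) (p : I -> R) :
  \sum_i p i = 1 -> inhabited I.
Proof.
case: (pickP (fun _ : I => true)) => [i _ _ | I0]; first exact: inhabits i.
by rewrite big_pred0 // => /eqP; rewrite eq_sym oner_eq0.
Qed.

(* Valid for every [x] because [ln] is [0] on nonpositive reals. *)
Lemma ln_inv (R : realType) (x : R) : ln x^-1 = - ln x.
Proof.
have [x_gt0 | x_le0] := ltP 0 x; first by rewrite lnV.
by rewrite !ln0 ?oppr0 // invr_le0.
Qed.

Lemma ln_prod (R : realType) (I : Type) (r : seq I) (F : I -> R) :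
  (forall i, 0 < F i) -> ln (\prod_(i <- r) F i) = \sum_(i <- r) ln (F i).
Proof.
move=> F_gt0; elim: r => [|i r IHr]; first by rewrite !big_nil ln1.
by rewrite !big_cons lnM ?IHr // posrE ?prodr_gt0.
Qed.

Section IndependentAttributes.
Variables (R : realType) (d : nat) (T : 'I_d -> finType) (Y : finType).
Variable P : {ffun attr T * Y -> R}.
Hypothesis P_ge0 : forall z, 0 <= P z.
Hypothesis pAY_gt0 : forall (a : attr T) (y : Y), 0 < pAY P a y.
Hypothesis indep : mutually_independent P.
Hypothesis cond_indep : cond_mutually_independent P.
Variable y : Y.

Lemma pY_gt0 (a : attr T) : 0 < pY P y.
Proof.
apply: lt_le_trans (pAY_gt0 a y) _.
by rewrite /pAY /pY; exact: (ler_sum_term (j := a)).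
Qed.

Lemma pA_gt0 (a : attr T) : 0 < pA P a.
Proof.
apply: lt_le_trans (pAY_gt0 a y) _.
by rewrite /pAY /pA; exact: (ler_sum_term (j := y)).
Qed.

Lemma pAkY_gt0 (a : attr T) k : 0 < pAkY P (a k) y.
Proof.
apply: lt_le_trans (pAY_gt0 a y) _.
by rewrite /pAY /pAkY; exact: (ler_sum_term (j := a)).
Qed.

Lemma pAk_gt0 (a : attr T) k : 0 < pAk P (a k).
Proof.
have pAk_ge0 : 0 <= pAk P (a k) by rewrite /pAk sumr_ge0 // => a' _; rewrite sumr_ge0.
rewrite lt_def pAk_ge0 andbT; apply/eqP => pAk0.
by have := pA_gt0 a; rewrite indep (bigD1 k) //= pAk0 mul0r ltxx.
Qed.

Lemma pY_Ak_gt0 (a : attr T) k : 0 < pY_Ak P y (a k).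
Proof. by rewrite divr_gt0 ?pAkY_gt0 ?pAk_gt0. Qed.

(* Bayes' rule turns [p(y|a)] into [p(a|y) p(y) / p(a)]; both factors of the
   quotient then split along the attributes. *)
Lemma pY_A_factor (a : attr T) :
  pY_A P y a = pY P y * \prod_(k < d) (pY_Ak P y (a k) / pY P y).
Proof.
have pY_neq0 := gt_eqF (pY_gt0 a).
have -> : pY_A P y a = pA_Y P a y * pY P y / pA P a.
  by rewrite /pY_A /pA_Y divfK ?pY_neq0.
rewrite cond_indep indep /pAk_Y /pY_Ak mulrAC [RHS]mulrC -prodf_div.
by congr (_ * _); apply: eq_bigr => k _; rewrite mulrAC.
Qed.

Lemma pY_A_ratio (a a' : attr T) :
  pY_A P y a / pY_A P y a' = \prod_(k < d) (pY_Ak P y (a k) / pY_Ak P y (a' k)).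
Proof.
have pY_neq0 := gt_eqF (pY_gt0 a).
rewrite !pY_A_factor invfM mulrACA divff ?pY_neq0 // mul1r -prodf_div.
apply: eq_bigr => k _.
by field; rewrite pY_neq0 (gt_eqF (pY_Ak_gt0 a' k)).
Qed.

Lemma ln_pY_A_ratio (a a' : attr T) :
  ln (pY_A P y a / pY_A P y a') =
  \sum_(k < d) ln (pY_Ak P y (a k) / pY_Ak P y (a' k)).
Proof. by rewrite pY_A_ratio ln_prod // => k; rewrite divr_gt0 ?pY_Ak_gt0. Qed.

End IndependentAttributes.

Theorem theorem1 (R : realType) (d : nat) (T : 'I_d -> finType) (Y : finType)
    (P : {ffun attr T * Y -> R}) :
  is_pmf P ->
  (forall (a : attr T) (y : Y), 0 < pAY P a y) ->
  mutually_independent P ->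
  cond_mutually_independent P ->
  ustar P =
    \big[Num.max/0]_(y : Y) \sum_(k < d)
       \big[Num.max/0]_(aa : T k * T k) uk P y aa.1 aa.2
  /\ ustar P <= \sum_(k < d) ukstar P k.
Proof.
move=> [P_ge0 P_sum1] pAY_gt0 indep cond_indep.
have [[a0 _]] := sum_eq1_inhabited P_sum1.
have ustarE : ustar P = \big[Num.max/0]_(y : Y) \sum_(k < d)
    \big[Num.max/0]_(aa : T k * T k) uk P y aa.1 aa.2.
  apply: eq_bigr => y _.
  rewrite -(bigmax_norm_sum_antisym (h := fun k x x' => ln (pY_Ak P y x / pY_Ak P y x')) a0);
    last by move=> k x x'; rewrite -invf_div ln_inv.
  by apply: eq_bigr => aa _; rewrite /u (ln_pY_A_ratio P_ge0 pAY_gt0 indep cond_indep).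
split => //; rewrite ustarE.
apply: bigmax_le => [|y _]; first by apply: sumr_ge0 => k _; exact: bigmax_ge_id.
apply: ler_sum => k _.
exact: (le_bigmax _ (fun y => \big[Num.max/0]_(aa : T k * T k) uk P y aa.1 aa.2)).
Qed.
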